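(* Let $\Bbbk$ be a field of characteristic $2$, $G=\langle\sigma\rangle$ cyclic of order $4$ acting on $V=V_3$ so that on the dual basis $\sigma x_1=x_1+x_2$, $\sigma x_2=x_2+x_3$, $\sigma x_3=x_3$, and let $H=\langle\sigma^2\rangle$. Let $A=\Bbbk[N^G(x_1),N^G_H(x_2),x_3]$ where $N^G(x_1)=\prod_{i=0}^3\sigma^i(x_1)$ and $N^G_H(x_2)=x_2\,\sigma(x_2)=x_2(x_2+x_3)$, and let $u=x_1^2x_3+x_1x_3^2+x_2^3+x_2^2x_3$. Then $\Bbbk[V]^G$ is a free $A$-module with basis $\{1,u\}$; in particular $r(\Bbbk[V]^G,A)=2$ and $s(\Bbbk[V]^G,A)=3$.
   Context: For graded $A$ with $A_0=\Bbbk$ and finitely generated graded $A$-module $M$, expand the Hilbert series quotient $H(M,t)/H(A,t)=a_0+a_1(t-1)+\cdots$ about $t=1$; $r(M,A)=a_0$ and $s(M,A)=a_1$. *)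

From HB Require Import structures.
From mathcomp Require Import all_boot all_order all_algebra.
From mathcomp Require Import mpoly.
Set Implicit Arguments. Unset Strict Implicit. Unset Printing Implicit Defensive.
Import Order.TTheory GRing.Theory.
Local Open Scope ring_scope.

Section Defs.
Variable k : fieldType.

Definition x1 : {mpoly k[3]} := 'X_(0 : 'I_3).
Definition x2 : {mpoly k[3]} := 'X_(1 : 'I_3).
Definition x3 : {mpoly k[3]} := 'X_(2 : 'I_3).

Definition sigma (f : {mpoly k[3]}) : {mpoly k[3]} :=
  comp_mpoly [tuple x1 + x2; x2 + x3; x3] f.

Definition G_invariant (f : {mpoly k[3]}) : Prop :=
  forall i : nat, iter i sigma f = f.

Definition NG_x1 : {mpoly k[3]} := \prod_(i < 4) iter i sigma x1.
Definition NGH_x2 : {mpoly k[3]} := x2 * sigma x2.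

Definition u : {mpoly k[3]} :=
  x1 ^+ 2 * x3 + x1 * x3 ^+ 2 + x2 ^+ 3 + x2 ^+ 2 * x3.

Definition inA (f : {mpoly k[3]}) : Prop :=
  exists p : {mpoly k[3]}, f = comp_mpoly [tuple NG_x1; NGH_x2; x3] p.

Definition has_dim (P : {mpoly k[3]} -> Prop) (n : nat) : Prop :=
  exists b : 'I_n -> {mpoly k[3]},
    [/\ forall i, P (b i),
        (forall c : 'I_n -> k, \sum_(i < n) c i *: b i = 0 -> forall i, c i = 0)
      & forall f, P f -> exists c : 'I_n -> k, f = \sum_(i < n) c i *: b i].

Definition hilbert_fun (P : {mpoly k[3]} -> Prop) (h : nat -> nat) : Prop :=
  forall d : nat, has_dim (fun f => P f /\ f \is d.-homog) (h d).

End Defs.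

(* Identify k[V] with k[x3][x2][x1]. On k[x3][x2] the generator sigma acts as
   x2 |-> x2 + x3; its invariant ring is B = k[x3, N] with N = x2 (x2 + x3), and
   k[x3][x2] = B + x2 B, a direct sum since the nonzero elements of B have even degree
   in x2. On k[x3][x2][x1], N^G(x1) is invariant and monic of degree 4 in x1, so
   division by it reduces an invariant to one of degree at most 3 in x1; comparing
   coefficients in sigma F = F (in characteristic 2) puts such an invariant in B + B u.
   The decomposition is unique because the x1-degree of a nonzero element of A is
   divisible by 4 while u has x1-degree 2. Finally A is a polynomial ring on generators
   of degrees 4, 2, 1 and deg u = 3, so H(k[V]^G, t) = (1 + t^3) H(A, t), whence r = 2
   and s = 3. *)

From HB Require Import structures.
From mathcomp Require Import all_boot all_order all_algebra.
From mathcomp Require Import mpoly.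
From mathcomp Require Import ring.
Import GRing.Theory.
Local Open Scope ring_scope.

Lemma poly_morph_eq (R S : nzRingType) (f g : {poly R} -> S) :
    {morph f : x y / x + y} -> {morph g : x y / x + y} ->
    {morph f : x y / x * y} -> {morph g : x y / x * y} ->
  (forall c, f c%:P = g c%:P) -> f 'X = g 'X -> f =1 g.
Proof.
move=> fD gD fM gM eqC eqX; elim/poly_ind => [|p c IHp]; first by rewrite -polyC0 eqC.
by rewrite fD gD fM gM IHp eqX eqC.
Qed.

Lemma mpoly_morph_eq n (R S : nzRingType) (f g : {mpoly R[n]} -> S) :
    {morph f : x y / x + y} -> {morph g : x y / x + y} ->
    {morph f : x y / x * y} -> {morph g : x y / x * y} -> f 1 = 1 -> g 1 = 1 ->
  (forall c, f c%:MP = g c%:MP) -> (forall i, f 'X_i = g 'X_i) -> f =1 g.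
Proof.
move=> fD gD fM gM f1 g1 eqC eqX p.
have f0 : f 0 = 0 by apply: (@addrI _ (f 0)); rewrite -fD !addr0.
have g0 : g 0 = 0 by apply: (@addrI _ (g 0)); rewrite -gD !addr0.
rewrite [p]mpolyE (big_morph f fD f0) (big_morph g gD g0); apply: eq_bigr => m _.
rewrite -mul_mpolyC fM gM eqC mpolyXE_id (big_morph f fM f1) (big_morph g gM g1).
congr (_ * _); apply: eq_bigr => i _.
by elim: (m i) => [|e IHe]; rewrite ?expr0 ?f1 ?g1 // !exprS fM gM IHe eqX.
Qed.

Lemma sum_indicator_ord {R : nzSemiRingType} n j (F : nat -> R) :
  \sum_(i < n) (i == j :> nat)%:R * F i = if (j < n)%N then F j else 0.
Proof.
case: ltnP => [lt_jn | le_nj].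
  rewrite (bigD1 (Ordinal lt_jn)) //= eqxx mul1r big1 ?addr0 // => i ne_ij.
  rewrite (_ : (i == j :> nat) = false) ?mul0r //.
  by apply: contraNF ne_ij => /eqP eq_ij; apply/eqP/val_inj.
by rewrite big1 // => i _; rewrite ltn_eqF ?mul0r // (leq_trans (ltn_ord i)).
Qed.

Section HomogeneousComponents.
Context {n l : nat} {R : comNzRingType}.

Lemma dhomog_prod_ord {m} {F : 'I_m -> {mpoly R[l]}} (d : 'I_m -> nat) :
  (forall i, F i \is (d i).-homog) -> \prod_i F i \is (\sum_i d i)%N.-homog.
Proof.
move=> hom_F; apply: (big_ind2 (fun p e => p \is e.-homog)) => [|p e q e' | i _].
- exact: dhomog1.
- exact: dhomogM.
exact: hom_F.
Qed.

Lemma dhomog_comp_mpolyX (lq : n.-tuple {mpoly R[l]}) (w : 'I_n -> nat) (m : 'X_{1..n}) :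
  (forall i, tnth lq i \is (w i).-homog) -> 'X_[m] \mPo lq \is (\sum_i w i * m i)%N.-homog.
Proof.
by move=> hom_lq; rewrite comp_mpolyX; apply: dhomog_prod_ord => i; apply: dhomogMn.
Qed.

Lemma dhomog_comp_mpoly (lq : n.-tuple {mpoly R[l]}) d (p : {mpoly R[n]}) :
  (forall i, tnth lq i \is 1.-homog) -> p \is d.-homog -> p \mPo lq \is d.-homog.
Proof.
move=> hom_lq /dhomogP hom_p; rewrite comp_mpolyEX big_seq; apply: rpred_sum => m m_p.
apply: rpredZ; rewrite -(hom_p m m_p) /=.
have -> : mdeg m = (\sum_i (fun=> 1%N) i * m i)%N.
  by rewrite mdegE; apply: eq_bigr => i _; rewrite mul1n.
exact: dhomog_comp_mpolyX.
Qed.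

Lemma pihomog_comp_mpoly (mf : measure n) (lq : n.-tuple {mpoly R[l]}) d p :
    (forall m, 'X_[m] \mPo lq \is (mf m).-homog) ->
  pihomog mdeg d (p \mPo lq) = pihomog mf d p \mPo lq.
Proof.
move=> hom_lq; elim/mpolyind: p => [|c m p _ _ IHp]; first by rewrite !linear0.
rewrite !linearP /= {}IHp; congr (c *: _ + _); have [<-|ne_d] := eqVneq (mf m) d.
  by rewrite pihomog_dE ?hom_lq // pihomog_dE // dhomogX.
by rewrite (pihomog_ne0 ne_d (hom_lq m)) (pihomog_ne0 ne_d) ?linear0 ?dhomogX.
Qed.

Lemma pihomogMr d e (p v : {mpoly R[n]}) : v \is e.-homog ->
  pihomog mdeg (d + e) (p * v) = pihomog mdeg d p * v.
Proof.
move=> hom_v; elim/mpolyind: p => [|c m p _ _ IHp]; first by rewrite mul0r !linear0 mul0r.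
rewrite mulrDl -scalerAl !linearP /= IHp mulrDl -scalerAl; congr (c *: _ + _).
have hom_mv : 'X_[m] * v \is (mdeg m + e).-homog by apply: dhomogM; rewrite ?dhomogX.
have [<-|ne_d] := eqVneq (mdeg m) d; first by rewrite !pihomog_dE ?dhomogX.
have ne_de : mdeg m + e != d + e by rewrite eqn_add2r.
by rewrite (pihomog_ne0 ne_de hom_mv) (pihomog_ne0 ne_d) ?mul0r ?dhomogX.
Qed.

Lemma pihomogM_lt d e (p v : {mpoly R[n]}) : v \is e.-homog -> (d < e)%N ->
  pihomog mdeg d (p * v) = 0.
Proof.
move=> hom_v lt_de; elim/mpolyind: p => [|c m p _ _ IHp]; first by rewrite mul0r linear0.
rewrite mulrDl -scalerAl !linearP /= IHp addr0.
have ne_d : mdeg m + e != d by rewrite neq_ltn (leq_trans lt_de) ?orbT // leq_addl.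
by rewrite (pihomog_ne0 ne_d) ?scaler0 //; apply: dhomogM; rewrite ?dhomogX.
Qed.

End HomogeneousComponents.

Section Dimension.
Context {k : fieldType}.
Local Notation MP := {mpoly k[3]}.

Lemma has_dim_eq (P Q : MP -> Prop) n :
  (forall f, P f <-> Q f) -> has_dim P n -> has_dim Q n.
Proof.
move=> PQ [b [Pb free span]]; exists b; split=> // [i | f /PQ /span //].
exact/PQ.
Qed.

Lemma has_dim_cat (P : MP -> Prop) {n1 n2} (b1 : 'I_n1 -> MP) (b2 : 'I_n2 -> MP) :
    (forall i, P (b1 i)) -> (forall j, P (b2 j)) ->
    (forall c1 c2, \sum_i c1 i *: b1 i + \sum_j c2 j *: b2 j = 0 ->
       (forall i, c1 i = 0) /\ (forall j, c2 j = 0)) ->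
    (forall f, P f -> exists c1 c2, f = \sum_i c1 i *: b1 i + \sum_j c2 j *: b2 j) ->
  has_dim P (n1 + n2).
Proof.
move=> Pb1 Pb2 free span; pose b i := match split i with inl j => b1 j | inr j => b2 j end.
have split_sum (c : 'I_(n1 + n2) -> k) : \sum_i c i *: b i =
    \sum_i c (lshift n2 i) *: b1 i + \sum_j c (rshift n1 j) *: b2 j.
  rewrite big_split_ord /b; congr (_ + _); apply: eq_bigr => i _.
    by rewrite (unsplitK (inl i)).
  by rewrite (unsplitK (inr i)).
exists b; split=> [i | c /eqP | f /span [c1 [c2 ->]]].
- by rewrite /b; case: (split i).
- rewrite split_sum => /eqP /free [c1_0 c2_0] i.
  by rewrite -(splitK i); case: (split i) => j /=.
pose c i := match split i with inl j => c1 j | inr j => c2 j end.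
exists c; rewrite split_sum /c; congr (_ + _); apply: eq_bigr => i _.
  by rewrite (unsplitK (inl i)).
by rewrite (unsplitK (inr i)).
Qed.

End Dimension.

(** * The weighted degree of A = k[N^G(x1), N^G_H(x2), x3] *)

Definition wA (i : 'I_3) : nat := nth 0 [:: 4; 2; 1] i.
Definition weight (m : 'X_{1..3}) : nat := \sum_i wA i * m i.

Lemma weight0 : weight 0%MM = 0%N.
Proof. by rewrite /weight big1 // => i _; rewrite mnm0E muln0. Qed.

Lemma weightD m1 m2 : weight (m1 + m2)%MM = (weight m1 + weight m2)%N.
Proof. by rewrite /weight -big_split; apply: eq_bigr => i _; rewrite mnmDE mulnDr. Qed.

HB.instance Definition _ := isMeasure.Build 3 weight weight0 weightD.

Lemma mdeg_le_weight m : (mdeg m <= weight m)%N.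
Proof. by rewrite mdegE; apply: leq_sum => -[[|[|[|i]]] lt_i] _ //=; rewrite leq_pmull. Qed.

(* Exponents of weight [D] have total degree [< D.+1], so they live in a finite type. *)
Definition wmon D : {set 'X_{1..3 < D.+1}} := [set m : 'X_{1..3 < D.+1} | weight m == D].

Lemma weight_homogE {R : nzRingType} D (q : {mpoly R[3]}) : q \is D.-homog for weight ->
  q = \sum_(j < #|wmon D|) q@_(enum_val j) *: 'X_[enum_val j].
Proof.
move=> hom_q; have le_q : (msize q <= D.+1)%N.
  rewrite msizeE; apply/bigmax_leqP_seq => m m_q _.
  by rewrite ltnS -(dhomog_mf hom_q m_q) mdeg_le_weight.
rewrite -{1}(pihomog_dE hom_q) (pihomogwE _ _ le_q).
rewrite -(big_enum_val (fun m : 'X_{1..3 < D.+1} => q@_m *: 'X_[m])).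
by apply: eq_bigl => m; rewrite inE.
Qed.

Section Invariants.
Variable k : fieldType.
Hypothesis char2 : 2 \in [pchar k].

(** * The substitution x2 |-> x2 + x3 on k[x3][x2] *)

(* We compute in k[x3][x2] = {poly {poly k}}, where [z] is x3 and ['X] is x2, and in
   k[x3][x2][x1] = {poly R2}, where ['X], [yP], [zP] are x1, x2, x3. There [tau], [Ny]
   and [inB] stand for sigma, N^G_H(x2) and membership in B = k[x3, Ny], while [sig],
   [Nx], [U] and [inA3] stand for sigma, N^G(x1), u and membership in A. *)
Local Notation R2 := {poly {poly k}}.
Local Notation z := (('X : {poly k})%:P : R2).

Lemma char2_R2 : 2 \in [pchar R2]. Proof. by rewrite !pchar_poly. Qed.

Definition tau : {rmorphism R2 -> R2} := comp_poly ('X + z).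

Lemma tauC c : tau c%:P = c%:P. Proof. exact: comp_polyC. Qed.
Lemma tauX : tau 'X = 'X + z. Proof. exact: comp_polyX. Qed.

Definition Ny : R2 := 'X * ('X + z).
Definition inB (g : R2) := exists q : R2, g = q \Po Ny.

Lemma tau_Ny : tau Ny = Ny.
Proof.
rewrite rmorphM rmorphD tauX tauC -addrA.
by rewrite addrr_pchar2 ?char2_R2 // addr0 mulrC.
Qed.

Lemma tauK : involutive tau.
Proof.
move=> g; rewrite /= -comp_polyA comp_polyD comp_polyX comp_polyC -addrA.
by rewrite addrr_pchar2 ?char2_R2 // addr0 comp_polyXr.
Qed.

Lemma size_Ny : size Ny = 3%N.
Proof.
by rewrite size_mul ?size_polyX ?size_XaddC // -size_poly_eq0 ?size_polyX ?size_XaddC.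
Qed.

Lemma monic_Ny : Ny \is monic.
Proof. by rewrite monicMl ?monicX ?monicXaddC. Qed.

Lemma Ny_neq0 : Ny != 0.
Proof. by rewrite -size_poly_eq0 size_Ny. Qed.

Lemma z_neq0 : z != 0.
Proof. by rewrite polyC_eq0 polyX_eq0. Qed.

Lemma inB_C c : inB c%:P. Proof. by exists c%:P; rewrite comp_polyC. Qed.
Lemma inB_Ny : inB Ny. Proof. by exists 'X; rewrite comp_polyX. Qed.
Lemma inB_D {a b} : inB a -> inB b -> inB (a + b).
Proof. by move=> [p ->] [q ->]; exists (p + q); rewrite comp_polyD. Qed.
Lemma inB_N {a} : inB a -> inB (- a).
Proof. by move=> [p ->]; exists (- p); rewrite rmorphN. Qed.
Lemma inB_M {a b} : inB a -> inB b -> inB (a * b).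
Proof. by move=> [p ->] [q ->]; exists (p * q); rewrite comp_polyM. Qed.

Lemma tau_inB g : inB g -> tau g = g.
Proof. by move=> [q ->]; rewrite /= -comp_polyA -[_ \Po ('X + z)]/(tau Ny) tau_Ny. Qed.

Lemma odd_size_inB {g} : inB g -> g != 0 -> odd (size g).
Proof.
move=> [q ->] nz_g; have nz_q : q != 0 by apply: contraNneq nz_g => ->; rewrite comp_poly0.
by rewrite (polySpred nz_g) size_comp_poly size_Ny /= muln2 odd_double.
Qed.

Lemma mulX_inB_eq0 a b : inB a -> inB b -> a = 'X * b -> b = 0.
Proof.
move=> Ba Bb eq_ab; apply/eqP; apply: contraT => nz_b.
have nz_a : a != 0 by rewrite eq_ab mulf_neq0 ?polyX_eq0.
by have := odd_size_inB Ba nz_a; rewrite eq_ab mulrC size_mulX //= (odd_size_inB Bb).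
Qed.

(* Induction on the degree, dividing by the monic [Ny]. *)
Lemma inB_decomp g : exists g0 g1, [/\ inB g0, inB g1 & g = g0 + 'X * g1].
Proof.
elim: {g}(size g) {-2}g (leqnn (size g)) => [|n IHn] g le_g.
  move: le_g; rewrite leqn0 size_poly_eq0 => /eqP ->.
  by exists 0, 0; split; rewrite ?mulr0 ?addr0 //; exists 0; rewrite comp_poly0.
have eq_g := Pdiv.IdomainMonic.divp_eq monic_Ny g.
set q := g %/ Ny in eq_g; set r := g %% Ny in eq_g.
have le_r : (size r <= 2)%N by have := ltn_modpN0 g Ny_neq0; rewrite size_Ny.
have le_q : (size q <= n)%N.
  by rewrite size_divp ?Ny_neq0 // size_Ny leq_subLR (leq_trans le_g) // add2n.
have [q0 [q1 [Bq0 Bq1 eq_q]]] := IHn _ le_q.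
exists (q0 * Ny + (r`_0)%:P), (q1 * Ny + (r`_1)%:P).
split; try by apply: inB_D; [apply: inB_M => //; apply: inB_Ny | apply: inB_C].
have eq_r : r = (r`_1)%:P * 'X + (r`_0)%:P.
  apply/polyP => -[|[|i]]; rewrite coefD coefMX !coefC //= ?addr0 ?add0r //.
  by rewrite nth_default // (leq_trans le_r).
rewrite eq_g eq_q {1}eq_r; ring.
Qed.

Lemma tau_sub_decomp {g0 g1} : inB g0 -> inB g1 ->
  tau (g0 + 'X * g1) - (g0 + 'X * g1) = z * g1.
Proof. by move=> Bg0 Bg1; rewrite rmorphD rmorphM tauX !tau_inB //; ring. Qed.

Lemma tau_sub_zB g : exists2 h, inB h & tau g - g = z * h.
Proof.
have [g0 [g1 [Bg0 Bg1 ->]]] := inB_decomp g.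
by exists g1; rewrite ?(tau_sub_decomp Bg0 Bg1).
Qed.

Lemma tau_fixed_inB {g} : tau g = g -> inB g.
Proof.
have [g0 [g1 [Bg0 Bg1 eq_g]]] := inB_decomp g.
move=> fix_g; have := tau_sub_decomp Bg0 Bg1; rewrite -eq_g fix_g subrr.
move/esym/eqP; rewrite mulf_eq0 (negbTE z_neq0) => /eqP g1_0.
by rewrite eq_g g1_0 mulr0 addr0.
Qed.

Lemma comp_Ny_inj : injective (comp_poly Ny).
Proof.
move=> p q eq_pq; apply/eqP; rewrite -subr_eq0 -(comp_poly_eq0 _ (q := Ny)) ?size_Ny //.
by rewrite comp_polyB eq_pq subrr.
Qed.

Lemma inB_z_dvd {h r} : inB h -> inB r -> z * h = Ny * r -> exists2 s, inB s & r = z * s.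
Proof.
move=> [ph ->] [pr ->] eq_hr.
have eq_p : z * ph = 'X * pr.
  by apply: comp_Ny_inj; rewrite !comp_polyM comp_polyC comp_polyX.
have ph0 : ph`_0 = 0.
  have := congr1 (fun p : R2 => p`_0) eq_p; rewrite coefCM coefXM /=.
  by move/eqP; rewrite mulf_eq0 polyX_eq0 => /eqP.
have eq_ph : ph = drop_poly 1 ph * 'X.
  rewrite -{1}(poly_take_drop 1 ph) expr1; suff -> : take_poly 1 ph = 0 by rewrite add0r.
  by apply/polyP => -[|i]; rewrite coef_take_poly coef0.
exists (drop_poly 1 ph \Po Ny); first by exists (drop_poly 1 ph).
rewrite -[z](comp_polyC _ Ny) -comp_polyM; congr (_ \Po _).
apply: (@mulIf _ 'X); first by rewrite polyX_eq0.
by rewrite mulrC -eq_p {1}eq_ph mulrA.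
Qed.

(** * Invariants of sigma on k[x3][x2][x1] *)

Local Notation R3 := {poly R2}.
Local Notation yP := (('X : R2)%:P : R3).
Local Notation zP := (z%:P : R3).

Lemma char2_R3 : 2 \in [pchar R3]. Proof. by rewrite pchar_poly char2_R2. Qed.

Definition sig : {rmorphism R3 -> R3} := comp_poly ('X + yP) \o map_poly tau.

Lemma sigC c : sig c%:P = (tau c)%:P.
Proof. by rewrite /sig /= map_polyC comp_polyC. Qed.

Lemma sigX : sig 'X = 'X + yP.
Proof. by rewrite /sig /= map_polyX comp_polyX. Qed.

Definition Nx : R3 := 'X * ('X + yP) * ('X + zP) * ('X + (('X : R2) + z)%:P).
Definition U : R3 := 'X^2 * zP + 'X * (z ^+ 2)%:P + (('X : R2) * Ny)%:P.

(* Identities that only hold in characteristic 2 are checked by [ring] after exhibiting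
   the difference of the two sides as a multiple of 2. *)
Lemma sig_Nx : sig Nx = Nx.
Proof.
have -> : sig Nx = ('X + yP) * ('X + zP + 2%:R * yP) * ('X + yP + zP)
                   * ('X + 2%:R * (yP + zP)).
  by rewrite /Nx !rmorphM !rmorphD sigX !sigC ?rmorphD tauX tauC; ring.
rewrite (pcharf0 char2_R3) !mul0r !addr0 /Nx; ring.
Qed.

Lemma monic_Nx : Nx \is monic.
Proof. by rewrite !monicMl ?monicX ?monicXaddC. Qed.

Lemma size_Nx : size Nx = 5%N.
Proof.
by rewrite !size_monicM ?monicX ?monicXaddC ?size_polyX ?size_XaddC
   ?monicMl ?monicX ?monicXaddC // -size_poly_eq0 size_XaddC.
Qed.

Lemma Nx_neq0 : Nx != 0.
Proof. by rewrite -size_poly_eq0 size_Nx. Qed.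

Lemma sig_U : sig U = U.
Proof.
have -> : sig U = U + 2%:R * ('X * yP * zP + 2%:R * yP ^+ 2 * zP
                              + 3%:R * yP * zP ^+ 2 + zP ^+ 3).
  rewrite /U /Ny !rmorphD !rmorphM ?rmorphXn sigX !sigC.
  by rewrite ?rmorphM ?rmorphXn ?rmorphD tauX tauC; ring.
by rewrite (pcharf0 char2_R3) mul0r addr0.
Qed.

Lemma size_U : size U = 3%N.
Proof.
have -> : U = (zP * 'X + (z ^+ 2)%:P) * 'X + (('X : R2) * Ny)%:P by rewrite /U; ring.
have nz_q : (zP * 'X + (z ^+ 2)%:P == 0) = false.
  by rewrite -size_poly_eq0 size_MXaddC polyC_eq0 (negbTE z_neq0) /= size_polyC z_neq0.
by rewrite size_MXaddC nz_q /= size_MXaddC polyC_eq0 (negbTE z_neq0) /= size_polyC z_neq0.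
Qed.

Lemma U_neq0 : U != 0.
Proof. by rewrite -size_poly_eq0 size_U. Qed.

Definition evalA : {rmorphism {poly R2} -> R3} := comp_poly Nx \o map_poly (comp_poly Ny).
Definition inA3 (F : R3) := exists P, F = evalA P.

Lemma evalA_C c : evalA c%:P = (c \Po Ny)%:P.
Proof. by rewrite /evalA /= map_polyC comp_polyC. Qed.

Lemma evalA_X : evalA 'X = Nx.
Proof. by rewrite /evalA /= map_polyX comp_polyX. Qed.

Lemma inA3_D {a b} : inA3 a -> inA3 b -> inA3 (a + b).
Proof. by move=> [p ->] [q ->]; exists (p + q); rewrite rmorphD. Qed.
Lemma inA3_N {a} : inA3 a -> inA3 (- a).
Proof. by move=> [p ->]; exists (- p); rewrite rmorphN. Qed.
Lemma inA3_M {a b} : inA3 a -> inA3 b -> inA3 (a * b).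
Proof. by move=> [p ->] [q ->]; exists (p * q); rewrite rmorphM. Qed.
Lemma inA3_C c : inB c -> inA3 c%:P.
Proof. by move=> [q ->]; exists q%:P; rewrite evalA_C. Qed.
Lemma inA3_Nx : inA3 Nx.
Proof. by exists 'X; rewrite evalA_X. Qed.

Lemma sig_evalA P : sig (evalA P) = evalA P.
Proof.
move: P; apply: (@poly_morph_eq _ _ (fun P => sig (evalA P)) evalA) => [a b|a b|a b|a b|c|];
  rewrite ?rmorphD ?rmorphM //.
  by rewrite evalA_C sigC tau_inB //; exists c.
by rewrite evalA_X sig_Nx.
Qed.

Lemma size_evalA P : P != 0 -> size (evalA P) = ((size P).-1 * 4).+1.
Proof.
move=> nz_P; have size_map : size (map_poly (comp_poly Ny) P) = size P.
  by apply: size_map_inj_poly; [exact: comp_Ny_inj | rewrite comp_poly0].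
have nz_map : map_poly (comp_poly Ny) P != 0 by rewrite -size_poly_eq0 size_map size_poly_eq0.
have := size_comp_poly (map_poly (comp_poly Ny) P) Nx; rewrite size_Nx size_map /= => <-.
by rewrite (polySpred _) // comp_poly_eq0 ?size_Nx.
Qed.

Lemma size_inA3 {a} : inA3 a -> a != 0 -> size a = 1 %[mod 4].
Proof.
move=> [P ->] nz; have nz_P : P != 0 by apply: contraNneq nz => ->; rewrite rmorph0.
by rewrite size_evalA // -addn1 modnMDl.
Qed.

Lemma inA3_eq_U {a b} : inA3 a -> inA3 b -> a = b * U -> b = 0.
Proof.
move=> Aa Ab eq_ab; apply/eqP; apply: contraT => nz_b.
have nz_a : a != 0 by rewrite eq_ab mulf_neq0 ?U_neq0.
have := size_inA3 Aa nz_a; rewrite eq_ab size_mul ?U_neq0 // size_U addn3 /=.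
by rewrite -addn2 -modnDml (size_inA3 Ab nz_b).
Qed.

Definition cubic (r0 r1 r2 r3 : R2) : R3 := r0%:P + r1%:P * 'X + r2%:P * 'X^2 + r3%:P * 'X^3.

Lemma coef_cubic r0 r1 r2 r3 i : (cubic r0 r1 r2 r3)`_i = nth 0 [:: r0; r1; r2; r3] i.
Proof.
rewrite !coefD !coefCM coefX !coefXn coefC.
by case: i => [|[|[|[|i]]]]; rewrite /= ?mulr0 ?mulr1 ?addr0 ?add0r // nth_nil.
Qed.

Lemma cubic_inj r0 r1 r2 r3 s0 s1 s2 s3 :
  cubic r0 r1 r2 r3 = cubic s0 s1 s2 s3 -> [/\ r0 = s0, r1 = s1, r2 = s2 & r3 = s3].
Proof.
move=> eq_rs; have coef_eq i := congr1 (fun p : R3 => p`_i) eq_rs.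
by move: (coef_eq 0%N) (coef_eq 1%N) (coef_eq 2%N) (coef_eq 3%N); rewrite !coef_cubic.
Qed.

Lemma cubicE (F : R3) : (size F <= 4)%N -> F = cubic F`_0 F`_1 F`_2 F`_3.
Proof.
move=> le_F; apply/polyP => i; rewrite coef_cubic.
by case: i => [|[|[|[|i]]]] //=; rewrite nth_nil nth_default // (leq_trans le_F).
Qed.

Lemma sig_CXn r i : sig (r%:P * 'X^i) = (tau r)%:P * ('X + yP) ^+ i.
Proof. by rewrite rmorphM rmorphXn sigC sigX. Qed.

Lemma sig_cubic r0 r1 r2 r3 : sig (cubic r0 r1 r2 r3) =
  cubic (tau r0 + 'X * tau r1 + 'X ^+ 2 * tau r2 + 'X ^+ 3 * tau r3)
        (tau r1 + 'X ^+ 2 * tau r3) (tau r2 + 'X * tau r3) (tau r3).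
Proof.
apply/eqP; rewrite -subr_eq0; apply/eqP.
have -> : sig (cubic r0 r1 r2 r3) -
    cubic (tau r0 + 'X * tau r1 + 'X ^+ 2 * tau r2 + 'X ^+ 3 * tau r3)
          (tau r1 + 'X ^+ 2 * tau r3) (tau r2 + 'X * tau r3) (tau r3) =
    2%:R * (('X * tau r2 + 'X ^+ 2 * tau r3)%:P * 'X + ('X * tau r3)%:P * 'X^2).
  rewrite /cubic 3!rmorphD [sig (_ * 'X)]rmorphM !sig_CXn !sigC sigX.
  (* [ring] must see the [tau r_i] as atoms. *)
  by move: (tau r0) (tau r1) (tau r2) (tau r3) => t0 t1 t2 t3; ring.
by rewrite (pcharf0 char2_R3) mul0r.
Qed.

Lemma fixed_cubic r0 r1 r2 r3 : sig (cubic r0 r1 r2 r3) = cubic r0 r1 r2 r3 ->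
  [/\ r3 = 0, inB r1, inB r2 & tau r0 - r0 = 'X * r1 + 'X ^+ 2 * r2].
Proof.
rewrite sig_cubic => /cubic_inj [eq0 eq1 eq2 eq3].
have [h Bh eq_h] := tau_sub_zB r2.
have r3_0 : r3 = 0.
  apply: (mulX_inB_eq0 (z * h)); [exact: inB_M (inB_C _) Bh | exact: tau_fixed_inB |].
  by rewrite -eq_h -{2}eq2 eq3 (GRing.subr_pchar2 char2_R2) (GRing.addKr_pchar2 char2_R2).
have fix_r2 : tau r2 = r2 by rewrite -{2}eq2 r3_0 rmorph0 mulr0 addr0.
have fix_r1 : tau r1 = r1 by rewrite -{2}eq1 r3_0 rmorph0 mulr0 addr0.
split=> //; try exact: tau_fixed_inB.
rewrite -{2}eq0 fix_r1 fix_r2 r3_0 rmorph0 mulr0 addr0 (GRing.subr_pchar2 char2_R2) -!addrA.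
by rewrite (GRing.addKr_pchar2 char2_R2).
Qed.

Lemma fixed_cubic_coefs {r0 r1 r2} : inB r1 -> inB r2 ->
  tau r0 - r0 = 'X * r1 + 'X ^+ 2 * r2 -> exists2 s, inB s & r1 = z ^+ 2 * s /\ r2 = z * s.
Proof.
move=> Br1 Br2 eq_r0; have [h Bh eq_h] := tau_sub_zB r0.
have Bzr2 : inB (z * r2) := inB_M (inB_C _) Br2.
(* As 'X^2 = Ny - z 'X, the hypothesis splits into a part in B and a part in 'X B. *)
have eq_zh : z * h - Ny * r2 = 'X * (r1 - z * r2) by rewrite -eq_h eq_r0 /Ny; ring.
have Bzh : inB (z * h - Ny * r2).
  by apply: inB_D; [apply: inB_M; [apply: inB_C | exact: Bh] | apply/inB_N/inB_M/Br2/inB_Ny].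
have /eqP := mulX_inB_eq0 _ _ Bzh (inB_D Br1 (inB_N Bzr2)) eq_zh.
rewrite subr_eq0 => /eqP r1E.
have [s Bs r2E] : exists2 s, inB s & r2 = z * s.
  by apply: inB_z_dvd Bh Br2 _; apply/eqP; rewrite -subr_eq0 eq_zh r1E subrr mulr0.
by exists s; rewrite // r1E r2E mulrA -expr2.
Qed.

Lemma fixed_cubic_span {F} : sig F = F -> (size F <= 4)%N ->
  exists a b, [/\ inA3 a, inA3 b & F = a + b * U].
Proof.
move=> fix_F /cubicE eq_F.
have /fixed_cubic [r3_0 Br1 Br2 eq_r0] :
  sig (cubic F`_0 F`_1 F`_2 F`_3) = cubic F`_0 F`_1 F`_2 F`_3 by rewrite -eq_F.
have [s Bs [r1E r2E]] := fixed_cubic_coefs Br1 Br2 eq_r0.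
pose c := F`_0 - s * ('X * Ny).
have eq_Fc : F = c%:P + s%:P * U by rewrite {1}eq_F r3_0 r1E r2E /cubic /U /c; ring.
have fix_c : tau c = c.
  apply: polyC_inj; rewrite -sigC.
  have -> : c%:P = F - s%:P * U by rewrite eq_Fc addrK.
  by rewrite rmorphB rmorphM fix_F sigC (tau_inB _ Bs) sig_U.
by exists c%:P, s%:P; split=> //; apply: inA3_C => //; exact: tau_fixed_inB.
Qed.

Lemma size_sig F : size (sig F) = size F.
Proof.
rewrite /sig /= size_comp_poly2 ?size_XaddC //.
by apply: size_map_inj_poly; [exact: can_inj tauK | rewrite rmorph0].
Qed.

Lemma fixed_divp_Nx {F} : sig F = F -> sig (F %/ Nx) = F %/ Nx /\ sig (F %% Nx) = F %% Nx.
Proof.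
move=> fix_F; have eq_F := Pdiv.IdomainMonic.divp_eq monic_Nx F.
set q := F %/ Nx in eq_F *; set r := F %% Nx in eq_F *.
have eq_qr : (sig q - q) * Nx = r - sig r.
  have eq_sig : sig q * Nx + sig r = q * Nx + r.
    by rewrite -{1}sig_Nx -rmorphM -rmorphD -eq_F fix_F.
  apply/eqP; rewrite -subr_eq0.
  have -> : (sig q - q) * Nx - (r - sig r) = (sig q * Nx + sig r) - (q * Nx + r) by ring.
  by rewrite eq_sig subrr.
have lt_r : (size r < 5)%N by rewrite -size_Nx ltn_modpN0 ?Nx_neq0.
have fix_q : sig q = q.
  apply/eqP; rewrite -subr_eq0; apply/negPn/negP => nz_q.
  have : (size (r - sig r)%R < 5)%N.
    by rewrite (leq_ltn_trans (size_polyD _ _)) // size_polyN size_sig gtn_max lt_r.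
  rewrite -eq_qr size_mul ?Nx_neq0 // size_Nx addnS /= -[5%N]/(4 + 1)%N addnC.
  by rewrite ltn_add2l ltnS leqn0 size_poly_eq0 (negbTE nz_q).
by split=> //; apply/eqP; rewrite eq_sym -subr_eq0 -eq_qr fix_q subrr mul0r.
Qed.

Lemma fixed_span F : sig F = F -> exists a b, [/\ inA3 a, inA3 b & F = a + b * U].
Proof.
elim: {F}(size F) {-2}F (leqnn (size F)) => [|n IHn] F le_F fix_F.
  by apply: fixed_cubic_span; rewrite // (leq_trans le_F).
have [le4|gt4] := leqP (size F) 4; first exact: fixed_cubic_span.
have [fix_q fix_r] := fixed_divp_Nx fix_F.
have eq_F := Pdiv.IdomainMonic.divp_eq monic_Nx F.
set q := F %/ Nx in fix_q eq_F; set r := F %% Nx in fix_r eq_F.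
have le_q : (size q <= n)%N.
  by rewrite size_divp ?Nx_neq0 // size_Nx leq_subLR (leq_trans le_F) // add4n ltnS -addn3 leq_addr.
have le_r : (size r <= 4)%N by have := ltn_modpN0 F Nx_neq0; rewrite size_Nx.
have [a1 [b1 [Aa1 Ab1 eq_q]]] := IHn _ le_q fix_q.
have [a2 [b2 [Aa2 Ab2 eq_r]]] := fixed_cubic_span fix_r le_r.
exists (a1 * Nx + a2), (b1 * Nx + b2).
split; try by apply: inA3_D => //; apply: inA3_M => //; exact: inA3_Nx.
by rewrite eq_F eq_q eq_r; ring.
Qed.

(** * Transfer to k[x1, x2, x3] *)

Local Notation MP := {mpoly k[3]}.
Local Notation x1 := (x1 k).
Local Notation x2 := (x2 k).
Local Notation x3 := (x3 k).
Local Notation gensA := [tuple NG_x1 k; NGH_x2 k; x3].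
Local Notation compA := (comp_mpoly gensA).

Lemma forall_var3 (P : MP -> Prop) : P x1 -> P x2 -> P x3 -> forall i : 'I_3, P 'X_i.
Proof. by move=> P1 P2 P3 [[|[|[|i]]] lt_i]. Qed.

Definition phi : {rmorphism MP -> R3} :=
  mmap (polyC \o polyC \o polyC) (tnth [tuple 'X; ('X : R2)%:P; ('X : {poly k})%:P%:P]).

Definition psi1 : {rmorphism {poly k} -> MP} := horner_eval x3 \o map_poly (@mpolyC 3 k).
Definition psi2 : {rmorphism R2 -> MP} := horner_eval x2 \o map_poly psi1.
Definition psi : {rmorphism R3 -> MP} := horner_eval x1 \o map_poly psi2.

Lemma psi1C c : psi1 c%:P = c%:MP. Proof. by rewrite /= map_polyC /horner_eval hornerC. Qed.
Lemma psi1X : psi1 'X = x3. Proof. by rewrite /= map_polyX /horner_eval hornerX. Qed.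
Lemma psi2C c : psi2 c%:P = psi1 c. Proof. by rewrite /= map_polyC /horner_eval hornerC. Qed.
Lemma psi2X : psi2 'X = x2. Proof. by rewrite /= map_polyX /horner_eval hornerX. Qed.
Lemma psiC c : psi c%:P = psi2 c. Proof. by rewrite /= map_polyC /horner_eval hornerC. Qed.
Lemma psiX : psi 'X = x1. Proof. by rewrite /= map_polyX /horner_eval hornerX. Qed.

Lemma phiC c : phi c%:MP = c%:P%:P%:P. Proof. exact: mmapC. Qed.
Lemma phi_x1 : phi x1 = 'X. Proof. by rewrite /= /x1 mmapX mmap1U. Qed.
Lemma phi_x2 : phi x2 = ('X : R2)%:P. Proof. by rewrite /= /x2 mmapX mmap1U. Qed.
Lemma phi_x3 : phi x3 = ('X : {poly k})%:P%:P. Proof. by rewrite /= /x3 mmapX mmap1U. Qed.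

Lemma psiK F : phi (psi F) = F.
Proof.
have psi1K c : phi (psi1 c) = c%:P%:P.
  apply: (@poly_morph_eq _ _ (fun c => phi (psi1 c)) (fun c => c%:P%:P));
    try by move=> a b; rewrite !(rmorphD, rmorphM).
    by move=> a; rewrite psi1C phiC.
  by rewrite psi1X phi_x3.
have psi2K c : phi (psi2 c) = c%:P.
  apply: (@poly_morph_eq _ _ (fun c => phi (psi2 c)) (fun c => c%:P));
    try by move=> a b; rewrite !(rmorphD, rmorphM).
    by move=> a; rewrite psi2C psi1K.
  by rewrite psi2X phi_x2.
apply: (@poly_morph_eq _ _ (fun c => phi (psi c)) id) => //;
  try by move=> a b; rewrite !(rmorphD, rmorphM).
  by move=> a; rewrite psiC psi2K.
by rewrite psiX phi_x1.
Qed.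

Lemma phiK p : psi (phi p) = p.
Proof.
apply: (@mpoly_morph_eq _ _ _ (fun p => psi (phi p)) id) => //;
  try by move=> a b; rewrite !(rmorphD, rmorphM).
- by rewrite !rmorph1.
- by move=> c; rewrite phiC psiC psi2C psi1C.
apply: (forall_var3 (fun p => psi (phi p) = p)).
- by rewrite phi_x1 psiX.
- by rewrite phi_x2 psiC psi2X.
by rewrite phi_x3 psiC psi2C psi1X.
Qed.

Lemma phi_inj : injective phi.
Proof. exact: can_inj phiK. Qed.

Lemma sigma_x1 : sigma x1 = x1 + x2. Proof. by rewrite /sigma /x1 comp_mpolyXU. Qed.
Lemma sigma_x2 : sigma x2 = x2 + x3. Proof. by rewrite /sigma /x2 comp_mpolyXU. Qed.
Lemma sigma_x3 : sigma x3 = x3. Proof. by rewrite /sigma /x3 comp_mpolyXU. Qed.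

Lemma sigmaM (f g : MP) : sigma (f * g) = sigma f * sigma g.
Proof. exact: rmorphM. Qed.

Lemma phi_sigma (f : MP) : phi (sigma f) = sig (phi f).
Proof.
apply: (@mpoly_morph_eq _ _ _ (fun f => phi (sigma f)) (fun f => sig (phi f)));
  try by move=> a b; rewrite /sigma !(rmorphD, rmorphM).
- by rewrite /sigma !rmorph1.
- by rewrite !rmorph1.
- by move=> c; rewrite /sigma comp_mpolyC phiC sigC tauC.
apply: (forall_var3 (fun f => phi (sigma f) = sig (phi f))).
- by rewrite sigma_x1 rmorphD phi_x1 phi_x2 sigX.
- by rewrite sigma_x2 rmorphD phi_x2 phi_x3 sigC tauX rmorphD.
by rewrite sigma_x3 phi_x3 sigC tauC.
Qed.

Lemma G_invariantE (f : MP) : G_invariant f <-> sigma f = f.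
Proof. by split=> [/(_ 1%N) // | fix_f]; elim=> //= i ->. Qed.

Lemma G_invariant_phi (f : MP) : G_invariant f <-> sig (phi f) = phi f.
Proof.
rewrite G_invariantE -phi_sigma.
by split=> [-> // | /phi_inj].
Qed.

Lemma phi_NG : phi (NG_x1 k) = Nx.
Proof.
rewrite /NG_x1 !big_ord_recr big_ord0 /= !rmorphM !phi_sigma phi_x1.
rewrite !(rmorphD, sigX, sigC, tauX, tauC) rmorph1.
have <- : 'X * ('X + yP) * ('X + zP + 2%:R * yP) * ('X + yP + zP + 2%:R * (yP + zP)) = Nx.
  by rewrite (pcharf0 char2_R3) !mul0r !addr0 /Nx rmorphD; ring.
ring.
Qed.

Lemma phi_u : phi (u k) = U.
Proof.
by rewrite /u /U /Ny !rmorphD !rmorphM ?rmorphXn phi_x1 phi_x2 phi_x3; ring.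
Qed.

Lemma phi_comp p : phi (compA p) = evalA (phi p).
Proof.
apply: (@mpoly_morph_eq _ _ _ (fun p => phi (compA p)) (fun p => evalA (phi p)));
  try by move=> a b; rewrite !(rmorphD, rmorphM).
- by rewrite !rmorph1.
- by rewrite !rmorph1.
- by move=> c; rewrite comp_mpolyC phiC evalA_C comp_polyC.
apply: (forall_var3 (fun p => phi (compA p) = evalA (phi p))).
- by rewrite /x1 comp_mpolyXU -/x1 phi_x1 phi_NG evalA_X.
- rewrite /x2 comp_mpolyXU -/x2 phi_x2 evalA_C comp_polyX /NGH_x2 rmorphM phi_sigma.
  by rewrite phi_x2 sigC tauX /Ny rmorphM.
by rewrite /x3 comp_mpolyXU -/x3 phi_x3 evalA_C comp_polyC.
Qed.

Lemma inA_phiP (f : MP) : inA f <-> inA3 (phi f).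
Proof.
split=> [[p ->] | [P eq_f]]; first by exists (phi p); rewrite phi_comp.
by exists (psi P); apply: phi_inj; rewrite phi_comp psiK.
Qed.

Lemma inA_sub {a b : MP} : inA a -> inA b -> inA (a - b).
Proof.
move=> /inA_phiP Aa /inA_phiP Ab; apply/inA_phiP; rewrite rmorphB.
by apply: inA3_D => //; apply: inA3_N.
Qed.

Lemma invariant_decomp (f : MP) : G_invariant f ->
  exists a b, [/\ inA a, inA b & f = a + b * u k].
Proof.
move=> /G_invariant_phi /fixed_span [a3 [b3 [Aa Ab eq_f]]].
exists (psi a3), (psi b3); split; try by apply/inA_phiP; rewrite psiK.
by apply: phi_inj; rewrite rmorphD rmorphM !psiK phi_u.
Qed.

Lemma inA_eq_u {a b : MP} : inA a -> inA b -> a = b * u k -> b = 0.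
Proof.
move=> /inA_phiP Aa /inA_phiP Ab /(congr1 phi); rewrite rmorphM phi_u.
by move=> /(inA3_eq_U Aa Ab) phi_b0; apply: phi_inj; rewrite phi_b0 rmorph0.
Qed.

Lemma invariant_decomp_unique {a b a' b' : MP} : inA a -> inA b -> inA a' -> inA b' ->
  a + b * u k = a' + b' * u k -> a' = a /\ b' = b.
Proof.
move=> Aa Ab Aa' Ab' eq_ab.
have eq_diff : a' - a = (b - b') * u k.
  apply/eqP; rewrite -subr_eq0.
  have -> : a' - a - (b - b') * u k = (a' + b' * u k) - (a + b * u k) by ring.
  by rewrite eq_ab subrr.
have /eqP := inA_eq_u (inA_sub Aa' Aa) (inA_sub Ab Ab') eq_diff; rewrite subr_eq0 => /eqP eq_b.
by move: eq_diff; rewrite eq_b subrr mul0r => /eqP; rewrite subr_eq0 => /eqP.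
Qed.

Lemma G_invariant_u : G_invariant (u k).
Proof. by apply/G_invariant_phi; rewrite phi_u sig_U. Qed.

Lemma G_invariant_inA (f : MP) : inA f -> G_invariant f.
Proof. by move=> /inA_phiP [P eq_f]; apply/G_invariant_phi; rewrite eq_f sig_evalA. Qed.

Lemma G_invariantM (f g : MP) : G_invariant f -> G_invariant g -> G_invariant (f * g).
Proof.
move=> /G_invariantE fix_f /G_invariantE fix_g; apply/G_invariantE.
by rewrite sigmaM fix_f fix_g.
Qed.

(** * Hilbert functions *)

Lemma dhomog_var (i : 'I_3) : ('X_i : MP) \is 1.-homog.
Proof. by rewrite dhomogX /= mdeg1. Qed.

Lemma dhomog_sigma d (f : MP) : f \is d.-homog -> sigma f \is d.-homog.
Proof.
apply: dhomog_comp_mpoly => -[[|[|[|i]]] lt_i] //=; rewrite (tnth_nth 0) /=;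
  by rewrite ?rpredD ?dhomog_var.
Qed.

Lemma dhomog_NG : NG_x1 k \is 4.-homog.
Proof.
have hom_iter i : iter i (@sigma k) x1 \is 1.-homog.
  by elim: i => [|i IHi]; [exact: dhomog_var | exact: dhomog_sigma].
by have := dhomog_prod_ord (m := 4) (fun=> 1%N) (fun i => hom_iter i); rewrite big_const_ord.
Qed.

Lemma dhomog_NGH : NGH_x2 k \is 2.-homog.
Proof. by apply: (@dhomogM _ _ _ 1 _ 1); [|apply: dhomog_sigma]; exact: dhomog_var. Qed.

Lemma dhomog_u : u k \is 3.-homog.
Proof.
have hX i n : ('X_i : MP) ^+ n \is n.-homog.
  by have := dhomogMn n (dhomog_var i); rewrite mul1n.
rewrite /u !rpredD //.
- by apply: (@dhomogM _ _ _ 2 _ 1); rewrite ?hX ?dhomog_var.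
- by apply: (@dhomogM _ _ _ 1 _ 2); rewrite ?hX ?dhomog_var.
- exact: hX.
by apply: (@dhomogM _ _ _ 2 _ 1); rewrite ?hX ?dhomog_var.
Qed.

Lemma dhomog_gensA i : tnth gensA i \is (wA i).-homog.
Proof.
case: i => -[|[|[|i]]] lt_i //; rewrite (tnth_nth 0) /=.
- exact: dhomog_NG.
- exact: dhomog_NGH.
exact: dhomog_var.
Qed.

Lemma dhomog_compAX m : compA 'X_[m] \is (weight m).-homog.
Proof. exact: dhomog_comp_mpolyX dhomog_gensA. Qed.

Lemma pihomog_compA d p : pihomog mdeg d (compA p) = compA (pihomog weight d p).
Proof. exact: pihomog_comp_mpoly dhomog_compAX. Qed.

Lemma inA_compA p : inA (compA p). Proof. by exists p. Qed.

Lemma compA_eq0 p : compA p = 0 -> p = 0.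
Proof.
move/(congr1 phi); rewrite phi_comp rmorph0 => /eqP; apply: contraTeq => nz_p.
by rewrite -size_poly_eq0 size_evalA // raddf_eq0 //; exact: phi_inj.
Qed.

Definition Abasis D (j : 'I_#|wmon D|) : MP := compA 'X_[enum_val j].

Lemma Abasis_homog D j : Abasis D j \is D.-homog.
Proof. by have := dhomog_compAX (enum_val j); move: (enum_valP j); rewrite inE => /eqP ->. Qed.

Lemma Abasis_sum D c : \sum_j c j *: Abasis D j = compA (\sum_j c j *: 'X_[enum_val j]).
Proof. by rewrite linear_sum; apply: eq_bigr => j _; rewrite linearZ. Qed.

Lemma Abasis_free D c : \sum_j c j *: Abasis D j = 0 -> forall j, c j = 0.
Proof.
rewrite Abasis_sum => /compA_eq0 eq0 j; have := congr1 (mcoeff (enum_val j)) eq0.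
rewrite raddf_sum mcoeff0 (bigD1 j) //= mcoeffZ mcoeffX eqxx mulr1 big1 ?addr0 // => i ne_ij.
by rewrite mcoeffZ mcoeffX -bmeqP (inj_eq enum_val_inj) (negbTE ne_ij) mulr0.
Qed.

Lemma homog_inA_span D f : inA f -> f \is D.-homog -> exists c, f = \sum_j c j *: Abasis D j.
Proof.
move=> [p ->] hom_f; rewrite -(pihomog_dE hom_f) pihomog_compA.
by rewrite {1}(weight_homogE _ _ (pihomogP _ D p)) -Abasis_sum; eexists.
Qed.

Lemma hilbert_A : hilbert_fun (@inA k) (fun D => #|wmon D|).
Proof.
move=> D; exists (Abasis D); split=> [j | c | f [Af hom_f]].
- by split; [exact: inA_compA | exact: Abasis_homog].
- exact: Abasis_free.
exact: homog_inA_span.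
Qed.

Lemma homog_invariant_decomp D f : G_invariant f -> f \is D.-homog ->
  exists a b, [/\ inA a, a \is D.-homog, inA b, b \is (D - 3).-homog
                & f = a + (if (3 <= D)%N then b * u k else 0)].
Proof.
move=> /invariant_decomp [_ [_ [[pa ->] [pb ->] ->]]] hom_f.
exists (pihomog mdeg D (compA pa)), (pihomog mdeg (D - 3) (compA pb)).
split; try exact: pihomogP; try by rewrite pihomog_compA; exact: inA_compA.
rewrite -{1}(pihomog_dE hom_f) raddfD /=; congr (_ + _).
case: ifP => [le3D | /negbT]; first by rewrite -{1}(subnK le3D) pihomogMr ?dhomog_u.
by rewrite -ltnNge; apply: pihomogM_lt dhomog_u.
Qed.

Definition hM D := (#|wmon D| + if (3 <= D)%N then #|wmon (D - 3)| else 0)%N.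

Lemma hilbert_invariants : hilbert_fun (@G_invariant k) hM.
Proof.
move=> D; rewrite /hM; case: ifP => le3D; last first.
  rewrite addn0; apply: has_dim_eq (hilbert_A D) => f.
  split=> [[/G_invariant_inA] // | [inv_f hom_f]].
  have [a [b [Aa hom_a _ _ ->]]] := homog_invariant_decomp _ _ inv_f hom_f.
  by rewrite le3D addr0.
have Abasis_u_sum D' (c : 'I_#|wmon D'| -> k) :
    \sum_j c j *: (Abasis D' j * u k) = (\sum_j c j *: Abasis D' j) * u k.
  by rewrite mulr_suml; apply: eq_bigr => j _; rewrite scalerAl.
apply: (has_dim_cat _ (Abasis D) (fun j => Abasis (D - 3) j * u k)).
- by move=> j; split; [apply/G_invariant_inA/inA_compA | exact: Abasis_homog].
- move=> j; split.
    by apply: G_invariantM; [apply/G_invariant_inA/inA_compA | exact: G_invariant_u].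
  by have := dhomogM (Abasis_homog _ j) dhomog_u; rewrite subnK.
- move=> c1 c2; rewrite Abasis_u_sum !Abasis_sum => eq0.
  have {}eq0 : compA (\sum_j c1 j *: 'X_[enum_val j]) + compA (\sum_j c2 j *: 'X_[enum_val j]) * u k
             = compA 0 + compA 0 * u k by rewrite eq0 rmorph0 mul0r addr0.
  have [a0 b0] := invariant_decomp_unique (inA_compA _) (inA_compA _)
    (inA_compA _) (inA_compA _) eq0.
  by split; apply: Abasis_free; rewrite Abasis_sum; [rewrite -a0 | rewrite -b0]; rewrite rmorph0.
move=> f [inv_f hom_f].
have [a [b [Aa hom_a Ab hom_b ->]]] := homog_invariant_decomp _ _ inv_f hom_f.
have [c1 ->] := homog_inA_span _ _ Aa hom_a; have [c2 ->] := homog_inA_span _ _ Ab hom_b.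
by exists c1, c2; rewrite le3D Abasis_u_sum.
Qed.

End Invariants.

Theorem mainTheorem13 (k : fieldType) (char2 : 2 \in [pchar k]) :
  (* k[V]^G is a free A-module with basis {1, u} *)
  (G_invariant (1 : {mpoly k[3]}) /\ G_invariant (u k) /\
   forall f : {mpoly k[3]}, G_invariant f ->
     exists a b, [/\ inA a, inA b, f = a + b * u k &
       forall a' b', inA a' -> inA b' -> f = a' + b' * u k -> a' = a /\ b' = b])
  /\
  (* H(k[V]^G,t) / H(A,t) = q(t), so r = q(1) = 2 and s = q'(1) = 3 *)
  (exists (hM hA : nat -> nat) (q : {poly rat}),
     [/\ hilbert_fun (@G_invariant k) hM, hilbert_fun (@inA k) hA,
         (forall d : nat, (hM d)%:R = \sum_(i < d.+1) q`_i * (hA (d - i)%N)%:R),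
         q.[1] = 2 & (q^`()).[1] = 3]).
Proof.
split.
  split; first by apply/G_invariantE; rewrite /sigma rmorph1.
  split=> [|f /(invariant_decomp _ char2) [a [b [Aa Ab eq_f]]]]; first exact: G_invariant_u.
  exists a, b; split=> // a' b' Aa' Ab' eq_f'.
  exact: (invariant_decomp_unique _ char2 Aa Ab Aa' Ab' (etrans (esym eq_f) eq_f')).
exists hM, (fun D => #|wmon D|), (1 + 'X^3); split.
- exact: hilbert_invariants.
- exact: hilbert_A.
- move=> d; under eq_bigr do rewrite coefD coef1 coefXn mulrDl.
  pose F i := (#|wmon (d - i)|)%:R : rat.
  rewrite big_split /= (sum_indicator_ord _ 0 F) (sum_indicator_ord _ 3 F) /F subn0 !ltnS.
  by rewrite /hM natrD; case: ifP.
- by rewrite !hornerE.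
by rewrite derivD derivC derivXn add0r !hornerE.
Qed.
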